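(* Let $m,n,c$ be positive integers, let items and categories be as in the context, and for each category $o\in\{1,\ldots,c\}$ let $n_o$ be the number of items in category $o$ (so $\sum_{o}n_o=m$). Let $\eta>0$, $\beta\ge 0$ and put $\lambda=\eta\beta/m$ and $a_l=2n_l+\lambda n_l^2$ for $l=1,\ldots,c$. Consider user vectors $\mathbf{u}_i(t)\in\mathbb{R}^c$, $i=1,\ldots,n$, $t\in\{0,1,2,\ldots\}$, evolving by $$\mathbf{u}_i(t+1)=\Big(\mathbf{I}_c+\frac{\eta\beta}{m}\mathbf{V}\mathbf{V}^T\Big)\mathbf{u}_i(t)$$ (the user dynamics with $\epsilon=0$, $\gamma=1$), where $\mathbf{V}=[\mathbf{v}_1,\ldots,\mathbf{v}_m]$. Fix a time $t$ and suppose there is an index $k\in\{1,\ldots,c\}$ with $\sum_{l\neq k}a_l>0$ such that for every pair of users $(i,j)$, $$u_i^{(k)}(t)\,u_j^{(k)}(t)\ \ge\ \frac{\|\mathbf{u}_i(t)\|_2\,\|\mathbf{u}_j(t)\|_2}{\sqrt{1+\Big(\frac{a_k}{\sum_{l\neq k}a_l}\Big)^2}}.$$ Then: (i) for every pair $(i,j)$, $\mathbf{u}_i(t+1)^T\mathbf{u}_j(t+1)\ge\mathbf{u}_i(t)^T\mathbf{u}_j(t)$; (ii) if moreover $n_k=\max_{o\in\{1,\ldots,c\}}n_o$, then for every pair $(i,j)$ and every positive integer $\tau$, $\mathbf{u}_i(t+\tau)^T\mathbf{u}_j(t+\tau)\ge\mathbf{u}_i(t+\tau-1)^T\mathbf{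u}_j(t+\tau-1)$.
   Context: There are $m$ items and $c$ categories; each item belongs to exactly one category, and the vector of an item $j$ in category $o$ is $\mathbf{v}_j=\mathbf{e}_o\in\mathbb{R}^c$, the $o$-th standard basis vector. $u_i^{(k)}(t)$ denotes the $k$-th coordinate of $\mathbf{u}_i(t)$. $\mathbf{I}_c$ is the $c\times c$ identity. *)

From HB Require Import structures.
From mathcomp Require Import all_boot all_order all_algebra.
From mathcomp Require Import reals.
Set Implicit Arguments. Unset Strict Implicit. Unset Printing Implicit Defensive.
Import Order.TTheory GRing.Theory Num.Theory.
Local Open Scope ring_scope.

(* Item-category matrix V = [v_1 ... v_m], v_j = e_{cat j} (c x m). *)
Definition itemV (R : ringType) (m c : nat) (cat : 'I_m -> 'I_c) : 'M[R]_(c, m) :=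
  \matrix_(o < c, j < m) (cat j == o)%:R.

Definition ncat (m c : nat) (cat : 'I_m -> 'I_c) (o : 'I_c) : nat :=
  #|[set j : 'I_m | cat j == o]|.

Definition dotc (R : ringType) (c : nat) (x y : 'cV[R]_c) : R :=
  \sum_(o < c) x o 0 * y o 0.

Definition norm2 (R : rcfType) (c : nat) (x : 'cV[R]_c) : R :=
  Num.sqrt (dotc x x).

From mathcomp Require Import all_boot all_order all_algebra.
From mathcomp Require Import reals.
From mathcomp Require Import ring lra.
Import Order.TTheory GRing.Theory Num.Theory.
Local Open Scope ring_scope.

(* One step multiplies the [o]-th coordinate by [d_o = 1 + lam n_o], because
   [V V^T = diag (n_o)].  Since [d_o^2 - 1 = lam a_o], the increment of
   [u_i^T u_j] is [lam * sum_o a_o u_i^(o) u_j^(o)].  By Cauchy-Schwarz the terms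
   [l <> k] contribute at least [- (sum_(l <> k) a_l) (|u_i| |u_j| - u_i^(k) u_j^(k))],
   and the cone condition, which gives
   [|u_i| |u_j| <= (1 + a_k / sum_(l <> k) a_l) u_i^(k) u_j^(k)], bounds this
   below by [- a_k u_i^(k) u_j^(k)], which the [k]-th term cancels.
   When [n_k] is maximal, norms grow by at most [d_k] while the [k]-th
   coordinates grow by exactly [d_k], so the cone condition persists. *)

Lemma sum_mul_sqr_le {R : realDomainType} {c : nat} (a b : 'I_c -> R) :
  (\sum_o a o * b o) ^+ 2 <= (\sum_o a o * a o) * (\sum_o b o * b o).
Proof.
have lagrange : \sum_l \sum_o (a l * b o - a o * b l) ^+ 2 =
    2 * ((\sum_o a o * a o) * (\sum_o b o * b o) - (\sum_o a o * b o) ^+ 2).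
  transitivity (\sum_l \sum_o (a l * a l * (b o * b o) + a o * a o * (b l * b l)
                               - 2 * (a l * b l * (a o * b o)))).
    by apply: eq_bigr => l _; apply: eq_bigr => o _; ring.
  rewrite expr2 !big_distrlr /=.
  under eq_bigr => l _ do rewrite sumrB big_split /=.
  rewrite sumrB big_split /= [X in _ + X - _]exchange_big /=.
  under [X in _ - X]eq_bigr => l _ do rewrite -mulr_sumr.
  rewrite -mulr_sumr; ring.
have : 0 <= \sum_l \sum_o (a l * b o - a o * b l) ^+ 2.
  by apply: sumr_ge0 => l _; apply: sumr_ge0 => o _; apply: sqr_ge0.
by rewrite lagrange pmulr_rge0 // subr_ge0.
Qed.

Lemma sum_norm_mul_le_norm2 {R : rcfType} {c : nat} (x y : 'cV[R]_c) :
  \sum_o `|x o 0 * y o 0| <= norm2 x * norm2 y.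
Proof.
have sqr_abs (z : 'cV[R]_c) o : `|z o 0| * `|z o 0| = z o 0 * z o 0.
  by rewrite -normrM ger0_norm // -expr2 sqr_ge0.
have := sum_mul_sqr_le (fun o => `|x o 0|) (fun o => `|y o 0|).
under [X in _ <= X * _ -> _]eq_bigr => o _ do rewrite sqr_abs.
under [X in _ <= _ * X -> _]eq_bigr => o _ do rewrite sqr_abs.
under [X in _ -> X <= _]eq_bigr => o _ do rewrite normrM.
rewrite /norm2 /dotc -sqrtrM ?sumr_ge0 // => [le_sqr|o _]; last by rewrite -expr2 sqr_ge0.
by apply: le_trans (ler_norm _) _; rewrite -sqrtr_sqr ler_wsqrtr.
Qed.

(* For [x = y]: [x] makes an angle of at most [arctan r] with the [k]-th axis. *)
Definition aligned {R : rcfType} {c : nat} (r : R) (k : 'I_c) (x y : 'cV[R]_c) :=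
  norm2 x * norm2 y / Num.sqrt (1 + r ^+ 2) <= x k 0 * y k 0.

Lemma aligned_weighted_sum_ge0 {R : rcfType} {c : nat} (a : 'I_c -> R) (k : 'I_c)
    (x y : 'cV[R]_c) :
  (forall o, 0 <= a o) -> 0 < \sum_(l < c | l != k) a l ->
  aligned (a k / \sum_(l < c | l != k) a l) k x y ->
  0 <= \sum_o a o * (x o 0 * y o 0).
Proof.
set S := \sum_(l < c | l != k) a l => a_ge0 S_gt0.
rewrite /aligned; set r := a k / S; set N := norm2 x * norm2 y; set p := x k 0 * y k 0.
move=> hxy.
have r_ge0 : 0 <= r by rewrite divr_ge0 // ltW.
have sqrt_gt0 : 0 < Num.sqrt (1 + r ^+ 2) by rewrite sqrtr_gt0; nra.
have sqrt_le : Num.sqrt (1 + r ^+ 2) <= 1 + r.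
  by rewrite -[X in _ <= X]ger0_norm ?addr_ge0 // -sqrtr_sqr ler_wsqrtr //; nra.
have N_ge0 : 0 <= N by rewrite mulr_ge0 ?sqrtr_ge0.
have p_ge0 : 0 <= p by apply: le_trans hxy; rewrite divr_ge0 ?sqrtr_ge0.
have N_le : N * S <= p * (S + a k).
  have -> : S + a k = (1 + r) * S by rewrite /r mulrDl mul1r mulfVK ?gt_eqF.
  rewrite mulrA; apply: ler_wpM2r; first exact: ltW.
  move: hxy; rewrite ler_pdivrMr // => hxy; apply: le_trans hxy _.
  by rewrite ler_wpM2l.
have off_k_le : \sum_(l < c | l != k) `|x l 0 * y l 0| <= N - p.
  have := sum_norm_mul_le_norm2 x y.
  by rewrite (bigD1 k) //= ger0_norm // -lerBrDl.
have off_k_ge : - (S * \sum_(l < c | l != k) `|x l 0 * y l 0|)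
                <= \sum_(l < c | l != k) a l * (x l 0 * y l 0).
  rewrite mulr_sumr -sumrN; apply: ler_sum => l lk.
  have al_le : a l <= S by rewrite /S (bigD1 l) //= lerDl sumr_ge0.
  apply: (@le_trans _ _ (- (a l * `|x l 0 * y l 0|))).
    by rewrite lerN2 ler_wpM2r.
  by rewrite -mulrN ler_wpM2l // lerNnormlW.
rewrite (bigD1 k) //= -/p.
have : S * \sum_(l < c | l != k) `|x l 0 * y l 0| <= S * (N - p).
  by rewrite ler_wpM2l // ltW.
have := a_ge0 k; nra.
Qed.

Lemma itemV_gram {R : nzRingType} {m c : nat} (cat : 'I_m -> 'I_c) :
  itemV R cat *m (itemV R cat)^T = diag_mx (\row_o (ncat cat o)%:R).
Proof.
apply/matrixP => o o'; rewrite !mxE.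
under eq_bigr => j _ do rewrite !mxE -natrM.
rewrite -natr_sum -mulrnA; congr _%:R.
have [<- | neq_oo'] := eqVneq o o'; last first.
  by rewrite muln0 big1 // => j _; case: eqP => // ->; rewrite (negbTE neq_oo').
rewrite muln1 /ncat -sum1_card [RHS]big_mkcond /=.
by apply: eq_bigr => j _; rewrite inE; case: (cat j == o).
Qed.

Definition diag_step {R : nzRingType} {c : nat} (lam : R) (w : 'I_c -> R) : 'M[R]_c :=
  diag_mx (\row_o (1 + lam * w o)).

Lemma user_step_diag {R : nzRingType} {m c : nat} (cat : 'I_m -> 'I_c) (lam : R) :
  1%:M + lam *: (itemV R cat *m (itemV R cat)^T) = diag_step lam (fun o => (ncat cat o)%:R).
Proof.
rewrite itemV_gram; apply/matrixP => o o'; rewrite !mxE.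
by case: (o == o'); rewrite ?mulr1n ?mulr0n ?mulr0 ?addr0.
Qed.

Lemma dotc_diag_mx {R : comNzRingType} {c : nat} (d : 'rV[R]_c) (x y : 'cV[R]_c) :
  dotc (diag_mx d *m x) (diag_mx d *m y) = \sum_o d 0 o ^+ 2 * (x o 0 * y o 0).
Proof. by rewrite /dotc !mul_diag_mx; apply: eq_bigr => o _; rewrite !mxE; ring. Qed.

Lemma norm2_diag_mx_le {R : rcfType} {c : nat} (d : 'rV[R]_c) (e : R) (x : 'cV[R]_c) :
  0 <= e -> (forall o, `|d 0 o| <= e) -> norm2 (diag_mx d *m x) <= e * norm2 x.
Proof.
move=> e_ge0 d_le; rewrite /norm2 dotc_diag_mx.
rewrite -[e in X in _ <= X]ger0_norm // -sqrtr_sqr -sqrtrM ?sqr_ge0 //.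
rewrite ler_wsqrtr // mulr_sumr; apply: ler_sum => o _.
apply: ler_wpM2r; first by rewrite -expr2 sqr_ge0.
by rewrite -real_normK ?num_real // lerXn2r ?nnegrE.
Qed.

Lemma aligned_diag_mx {R : rcfType} {c : nat} (r : R) (k : 'I_c) (d : 'rV[R]_c)
    (x y : 'cV[R]_c) :
  (forall o, `|d 0 o| <= d 0 k) ->
  aligned r k x y -> aligned r k (diag_mx d *m x) (diag_mx d *m y).
Proof.
rewrite /aligned => d_le hxy.
have dk_ge0 : 0 <= d 0 k by apply: le_trans (d_le k).
have -> : (diag_mx d *m x) k 0 * (diag_mx d *m y) k 0 = d 0 k ^+ 2 * (x k 0 * y k 0).
  by rewrite !mul_diag_mx !mxE; ring.
apply: le_trans (ler_wpM2l (sqr_ge0 _) hxy).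
rewrite mulrA ler_wpM2r ?invr_ge0 ?sqrtr_ge0 //.
have -> : d 0 k ^+ 2 * (norm2 x * norm2 y) = (d 0 k * norm2 x) * (d 0 k * norm2 y).
  by ring.
by apply: ler_pM; rewrite ?sqrtr_ge0 ?norm2_diag_mx_le.
Qed.

(* [(1 + lam * w) ^+ 2 = 1 + lam * sq_gain lam w]; for [w = n_l] this is the
   paper's [a_l]. *)
Definition sq_gain {R : nzRingType} (lam w : R) : R := 2 * w + lam * w ^+ 2.

Lemma dotc_diag_step_ge {R : rcfType} {c : nat} (lam : R) (w : 'I_c -> R) (k : 'I_c)
    (x y : 'cV[R]_c) :
  0 <= lam -> (forall o, 0 <= w o) ->
  0 < \sum_(l < c | l != k) sq_gain lam (w l) ->
  aligned (sq_gain lam (w k) / \sum_(l < c | l != k) sq_gain lam (w l)) k x y ->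
  dotc x y <= dotc (diag_step lam w *m x) (diag_step lam w *m y).
Proof.
move=> lam_ge0 w_ge0 S_gt0 hxy.
rewrite -subr_ge0 dotc_diag_mx /dotc -sumrB.
rewrite (eq_bigr (fun o => lam * (sq_gain lam (w o) * (x o 0 * y o 0)))) => [|o _].
  rewrite -mulr_sumr mulr_ge0 //; apply: aligned_weighted_sum_ge0 hxy => // o.
  by rewrite addr_ge0 ?mulr_ge0 ?sqr_ge0.
by rewrite mxE /sq_gain; ring.
Qed.

Lemma aligned_diag_step {R : rcfType} {c : nat} (lam : R) (w : 'I_c -> R) (r : R)
    (k : 'I_c) (x y : 'cV[R]_c) :
  0 <= lam -> (forall o, 0 <= w o <= w k) ->
  aligned r k x y -> aligned r k (diag_step lam w *m x) (diag_step lam w *m y).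
Proof.
move=> lam_ge0 w_bnd; apply: aligned_diag_mx => o; rewrite !mxE.
have /andP[w_ge0 w_le] := w_bnd o.
by rewrite ger0_norm ?addr_ge0 ?mulr_ge0 // lerD2l ler_wpM2l.
Qed.

Theorem corollary1 (R : realType) (m n c : nat)
  (hm : (0 < m)%N) (hn : (0 < n)%N) (hc : (0 < c)%N)
  (cat : 'I_m -> 'I_c) (eta beta : R) (heta : 0 < eta) (hbeta : 0 <= beta)
  (u : 'I_n -> nat -> 'cV[R]_c)
  (hdyn : forall (i : 'I_n) (s : nat),
     u i s.+1 = (1%:M + (eta * beta / m%:R) *: (itemV R cat *m (itemV R cat)^T)) *m u i s)
  (t : nat) (k : 'I_c)
  (hpos : 0 < \sum_(l < c | l != k)
            (2 * (ncat cat l)%:R + (eta * beta / m%:R) * (ncat cat l)%:R ^+ 2))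
  (hcone : forall i j : 'I_n,
     norm2 (u i t) * norm2 (u j t) /
       Num.sqrt (1 + ((2 * (ncat cat k)%:R + (eta * beta / m%:R) * (ncat cat k)%:R ^+ 2)
          / (\sum_(l < c | l != k)
               (2 * (ncat cat l)%:R + (eta * beta / m%:R) * (ncat cat l)%:R ^+ 2))) ^+ 2)
     <= u i t k 0 * u j t k 0) :
  (forall i j : 'I_n, dotc (u i t) (u j t) <= dotc (u i t.+1) (u j t.+1)) /\
  (ncat cat k = \max_(o < c) ncat cat o ->
   forall (i j : 'I_n) (tau : nat), (0 < tau)%N ->
     dotc (u i (t + tau - 1)%N) (u j (t + tau - 1)%N) <= dotc (u i (t + tau)%N) (u j (t + tau)%N)).
Proof.
set lam := eta * beta / m%:R in hdyn hpos hcone *.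
set r := _ / _ in hcone.
have lam_ge0 : 0 <= lam by rewrite divr_ge0 ?mulr_ge0 // ltW.
have step i s : u i s.+1 = diag_step lam (fun o => (ncat cat o)%:R) *m u i s.
  by rewrite hdyn user_step_diag.
have mono s : (forall i j, aligned r k (u i s) (u j s)) ->
    forall i j, dotc (u i s) (u j s) <= dotc (u i s.+1) (u j s.+1).
  by move=> al i j; rewrite !step; apply: (dotc_diag_step_ge _ _ k) => //; apply: al.
split; first exact: mono.
move=> nk_max.
have al q : forall i j, aligned r k (u i (t + q)%N) (u j (t + q)%N).
  elim: q => [|q IH] i j; first by rewrite addn0; apply: hcone.
  rewrite addnS !step; apply: aligned_diag_step => // o.
  by rewrite ler0n ler_nat nk_max (leq_bigmax o).
by move=> i j [//|tau] _; rewrite addnS subn1 /=; apply: mono; apply: al.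
Qed.
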